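(* For every $m\ge 1$ and every $\alpha\in\mathbb{S}_m$, the element $\alpha-\sigma_m^{-1}\alpha\sigma_m$ of the group algebra $\mathbb{C}[\mathbb{S}_m]$ lies in the linear span of all generalized Vassiliev elements in $\mathbb{C}[\mathbb{S}_m]$. Consequently any two permutations conjugate by a power of $\sigma_m$ (i.e. any two hyper arc diagrams representing the same hyper chord diagram) are equal modulo generalized Vassiliev relations.
   Context: Permutations $\alpha\in\mathbb{S}_m$ act on $[m]=\{1,\dots,m\}$; $\sigma_m=(1,2,\dots,m)$ is the standard long cycle. A permutation $\alpha\in\mathbb{S}_m$ is called a hyper arc diagram; its cycles are called hyper edges and the elements of a cycle its legs. A hyper chord diagram is the orbit of $\alpha$ under conjugation $\alpha\mapsto\sigma_m^{-k}\alpha\sigma_m^{k}$ (cyclic shift). Generalized Vassiliev elements: let $m\ge2$, $\gamma\in\mathbb{S}_{m-1}$, and $q\in[m-1]\cup\{*\}$. For $t\in\{0,1,\dots,m-1\}$ let $\alpha_t=\alpha_t(\gamma,q)\in\mathbb{S}_m$ be obtained as follows: place the points $1,\dots,m-1$ on a line in increasing order, insert a new point $x$ (the free leg) in the gap between $t$ and $t+1$ (before $1$ if $t=0$, after $m-1$ if $t=m-1$), and relabel the $m$ points by $1,\dots,m$ in order; the permutation acts as $\gamma$ on the old points, except that if $q\neq *$ then $q\mapsto x\mapsto\gamma(q)$, and if $q=*$ then $x$ is a fixed point. For a cycle $v$ of $\gamma$ put $E(\gamma,q,v)=\sum_{j\in v}\big(\alpha_{j-1}-\alpha_j\big)\in\mathbb{C}[\mathbb{S}_m]$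 (the free leg placed immediately before a leg $j$ of $v$ with sign $+$, immediately after it with sign $-$). $E(\gamma,q,v)$ is a one-hyper-arc element if $q\ne *$ and $q\in v$, and a two-hyper-arc element otherwise. Both kinds are called generalized Vassiliev elements; a function on permutations satisfies the generalized Vassiliev relations if its linear extension vanishes on all of them. *)

From mathcomp Require Import all_boot all_order all_algebra all_fingroup.
From mathcomp Require Import algC.
Set Implicit Arguments. Unset Strict Implicit. Unset Printing Implicit Defensive.
Import GRing.Theory Num.Theory.
Local Open Scope ring_scope.

(* Conventions: [m] = {1,...,m} is modelled by 'I_m = {0,...,m-1} (label k <-> k-1).
   Permutations of [m] are elements of 'S_m.  MathComp composes permutations
   left-to-right: (s * t)%g x = t (s x). *)

Notation galg m := {ffun 'S_m -> algC}.

Definition pvec (m : nat) (a : 'S_m) : galg m := [ffun b => ((b == a)%:R : algC)].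

(* The standard long cycle sigma_m = (1,2,...,m): k |-> k+1 mod m. *)
Definition sigma_long (m : nat) : 'S_m := perm (can_inj (@ordSK m)).

(* alpha_t(gamma, q) in S_{n+1} (m = n+1), for t : 'I_n.+1 (t = 0..m-1).
   Old point i : 'I_n is relabelled lift t i (i.e. i if i < t, i+1 otherwise),
   and the free leg x gets the new label t.
   lift_perm t t gamma fixes t and acts as gamma on old points;
   if q = Some q0, precomposing with the transposition (lift t q0, t) yields
   lift t q0 |-> t |-> lift t (gamma q0); if q = None, x = t is a fixed point. *)
Definition alpha_t (n : nat) (gamma : 'S_n) (q : option 'I_n) (t : 'I_n.+1)
  : 'S_n.+1 :=
  match q with
  | None => lift_perm t t gamma
  | Some q0 => (tperm (lift t q0) t * lift_perm t t gamma)%g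
  end.

(* E(gamma, q, v) = sum_{j in v} (alpha_{j-1} - alpha_j), with the cycle v given
   as a set of (0-indexed) legs; for 0-indexed j, the 1-indexed gaps j-1 and j
   are the 0-indexed positions j and j+1. *)
Definition vassE (n : nat) (gamma : 'S_n) (q : option 'I_n) (v : {set 'I_n})
  : galg n.+1 :=
  \sum_(j in v) (pvec (alpha_t gamma q (inord j)) - pvec (alpha_t gamma q (inord j.+1))).

(* Generalized Vassiliev element indexed by (gamma, q, x): the cycle v of gamma
   is the one containing x (every cycle arises this way). *)
Definition vass_gen (n : nat) (i : 'S_n * option 'I_n * 'I_n) : galg n.+1 :=
  vassE i.1.1 i.1.2 (porbit i.1.1 i.2).

(* Membership in the linear span of all generalized Vassiliev elements:
   f = sum_i c_i E_i, written coordinatewise (the ffun type has no lmod instance). *)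
Definition in_vass_span (n : nat) (f : galg n.+1) : Prop :=
  exists c : 'S_n * option 'I_n * 'I_n -> algC,
    forall b : 'S_n.+1,
      f b = \sum_(i : 'S_n * option 'I_n * 'I_n) c i * vass_gen i b.

From mathcomp Require Import all_boot all_order all_algebra all_fingroup algC.
Set Implicit Arguments. Unset Strict Implicit. Unset Printing Implicit Defensive.
Import GRing.Theory Num.Theory.
Local Open Scope ring_scope.

(* Summing E(gamma, q, v) over all cycles v of gamma telescopes to
   alpha_0 - alpha_{m-1}, since the legs of all cycles together are all points
   of [m-1]; weighting the term indexed by a point x with 1/|orbit of x| turns
   the sum over points into a sum over cycles.  Conversely every alpha equals
   some alpha_0(gamma, q), and conjugating alpha_0(gamma, q) by the long cycle
   gives alpha_{m-1}(gamma, q), as inserting the free leg first or last differs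
   only by a cyclic relabelling. *)

Lemma sum_porbit_avg (R : numFieldType) n (g : 'S_n) (f : 'I_n -> R) :
  \sum_(x : 'I_n) (#|porbit g x|%:R)^-1 * \sum_(j in porbit g x) f j = \sum_j f j.
Proof.
under eq_bigr do rewrite mulr_sumr.
rewrite (exchange_big_dep xpredT) //=; apply: eq_bigr => j _.
rewrite (eq_bigr (fun _ => (#|porbit g j|%:R)^-1 * f j)); last first.
  by move=> x /= jx; have /eqP -> : porbit g x == porbit g j
    by rewrite eq_porbit_mem porbit_sym.
rewrite (eq_bigl (mem (porbit g j))) => [|x]; last by rewrite /= porbit_sym.
by rewrite sumr_const -mulrnAl -mulr_natr mulVf ?mul1r ?pnatr_eq0 ?card_porbit_neq0.
Qed.

Lemma sum_vassE_porbits n (gam : 'S_n) (q : option 'I_n) (b : 'S_n.+1) :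
  \sum_(x : 'I_n) (#|porbit gam x|%:R)^-1 * vassE gam q (porbit gam x) b
  = (pvec (alpha_t gam q ord0) - pvec (alpha_t gam q ord_max)) b.
Proof.
under eq_bigr => x _ do rewrite /vassE sum_ffunE.
rewrite (sum_porbit_avg gam (fun j => (pvec _ - pvec _) b)).
set u := fun k : nat => pvec (alpha_t gam q (inord k)) b.
rewrite (eq_bigr (fun j : 'I_n => - (u j.+1 - u j))); last first.
  by move=> j _; rewrite /u !ffunE opprB.
rewrite sumrN -(big_mkord xpredT (fun k => u k.+1 - u k)) telescope_sumr //.
rewrite opprB /u.
have -> : inord 0 = ord0 :> 'I_n.+1 by apply: val_inj; rewrite /= inordK.
have -> : inord n = ord_max :> 'I_n.+1 by apply: val_inj; rewrite /= inordK.
by rewrite !ffunE.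
Qed.

Lemma in_vass_span0 n : in_vass_span (0 : galg n.+1).
Proof. by exists (fun _ => 0) => b; rewrite ffunE big1 // => i _; rewrite mul0r. Qed.

Lemma in_vass_spanD n (f g : galg n.+1) :
  in_vass_span f -> in_vass_span g -> in_vass_span (f + g).
Proof.
move=> [c1 Ef] [c2 Eg]; exists (fun i => c1 i + c2 i) => b.
by rewrite ffunE Ef Eg -big_split; apply: eq_bigr => i _; rewrite mulrDl.
Qed.

Lemma alpha_t_ends_in_vass_span n (gam : 'S_n) (q : option 'I_n) :
  in_vass_span (pvec (alpha_t gam q ord0) - pvec (alpha_t gam q ord_max)).
Proof.
pose c (i : 'S_n * option 'I_n * 'I_n) : algC :=
  if i.1 == (gam, q) then (#|porbit gam i.2|%:R)^-1 else 0.
exists c => b; rewrite -sum_vassE_porbits.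
have -> : \sum_i c i * vass_gen i b
          = \sum_(u : 'S_n * option 'I_n) \sum_x c (u, x) * vass_gen (u, x) b.
  by rewrite pair_big; apply: eq_bigr => -[].
rewrite (bigD1 (gam, q)) //= [X in _ = _ + X]big1 ?addr0; last first.
  by move=> u /negbTE neq_u; apply: big1 => x _; rewrite /c /= neq_u mul0r.
by apply: eq_bigr => x _; rewrite /c eqxx.
Qed.

Lemma sigma_longE m (x : 'I_m) : val (sigma_long m x) = (x.+1 %% m)%N.
Proof. by rewrite permE. Qed.

Lemma sigma_long_max n : sigma_long n.+1 ord_max = ord0.
Proof. by apply: val_inj; rewrite sigma_longE /= modnn. Qed.

Lemma sigma_long_lift_max n (i : 'I_n) :
  sigma_long n.+1 (lift ord_max i) = lift ord0 i.
Proof.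
apply: val_inj; rewrite sigma_longE /= /bump leqNgt ltn_ord add0n.
by rewrite modn_small // ltnS.
Qed.

Lemma lift_perm_max_sigmaJ n (g : 'S_n) :
  lift_perm ord_max ord_max g
  = (sigma_long n.+1 * lift_perm ord0 ord0 g * (sigma_long n.+1)^-1)%g.
Proof.
apply/permP => x; rewrite !permM; apply: (canRL (permKV _)); rewrite invgK.
have [i ->|->] := unliftP ord_max x.
  by rewrite !lift_perm_lift !sigma_long_lift_max lift_perm_lift.
by rewrite !lift_perm_id sigma_long_max lift_perm_id.
Qed.

Lemma tperm_max_sigmaJ n (i : 'I_n) :
  tperm (lift ord_max i) ord_max
  = (sigma_long n.+1 * tperm (lift ord0 i) ord0 * (sigma_long n.+1)^-1)%g.
Proof.
rewrite -mulgA -[X in (X * _)%g](invgK (sigma_long n.+1)) -conjgE tpermJ.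
by rewrite -sigma_long_lift_max -sigma_long_max !permK.
Qed.

Lemma alpha_t_max_sigmaJ n (gam : 'S_n) (q : option 'I_n) :
  alpha_t gam q ord_max
  = (sigma_long n.+1 * alpha_t gam q ord0 * (sigma_long n.+1)^-1)%g.
Proof.
case: q => [q0|] /=; last exact: lift_perm_max_sigmaJ.
by rewrite tperm_max_sigmaJ lift_perm_max_sigmaJ !mulgA mulgKV.
Qed.

Lemma lift_perm_surj n (i j : 'I_n.+1) (s : 'S_n.+1) :
  s i = j -> exists g : 'S_n, lift_perm i j g = s.
Proof.
move=> sij; pose f k := odflt k (unlift j (s (lift i k))).
have fE k : lift j (f k) = s (lift i k).
  rewrite /f; case: unliftP => [l -> //|/= E].
  by move: E (neq_lift i k); rewrite -sij => /perm_inj ->; rewrite eqxx.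
have f_inj : injective f.
  by move=> k l /(congr1 (lift j)); rewrite !fE => /perm_inj /lift_inj.
exists (perm f_inj); apply/permP => x.
have [k ->|->] := unliftP i x; last by rewrite lift_perm_id.
by rewrite lift_perm_lift permE fE.
Qed.

Lemma alpha_t0_surj n (a : 'S_n.+1) :
  exists gam q, alpha_t gam q ord0 = a.
Proof.
set p := (a^-1)%g ord0.
have a_p : a p = ord0 by rewrite permKV.
have [q0 p_lift|p0] := unliftP ord0 p.
  have [gam Egam] : exists gam : 'S_n,
      lift_perm ord0 ord0 gam = (tperm p ord0 * a)%g.
    by apply: lift_perm_surj; rewrite permM tpermR.
  by exists gam, (Some q0); rewrite /= Egam -p_lift mulgA tperm2 mul1g.
have [gam Egam] : exists gam : 'S_n, lift_perm ord0 ord0 gam = a.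
  by apply: lift_perm_surj; rewrite -{1}p0.
by exists gam, None.
Qed.

Lemma sub_sigma_longJ_in_vass_span n (a : 'S_n.+1) :
  in_vass_span (pvec a - pvec (sigma_long n.+1 * a * (sigma_long n.+1)^-1)%g).
Proof.
have [gam [q <-]] := alpha_t0_surj a.
by rewrite -alpha_t_max_sigmaJ; apply: alpha_t_ends_in_vass_span.
Qed.

Theorem lemma1 (n : nat) (a : 'S_n.+1) :
  in_vass_span (pvec a - pvec (sigma_long n.+1 * a * (sigma_long n.+1)^-1)%g)
  /\ (forall k : nat,
        in_vass_span (pvec a - pvec ((sigma_long n.+1 ^+ k) * a
                                        * (sigma_long n.+1 ^+ k)^-1)%g)).
Proof.
split=> [|k]; first exact: sub_sigma_longJ_in_vass_span.
set s := sigma_long n.+1.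
elim: k => [|k IHk].
  by rewrite expg0 mul1g invg1 mulg1 subrr; apply: in_vass_span0.
set b := (s ^+ k * a * (s ^+ k)^-1)%g in IHk.
have -> : (s ^+ k.+1 * a * (s ^+ k.+1)^-1)%g = (s * b * s^-1)%g.
  by rewrite expgS invMg !mulgA.
have -> : pvec a - pvec (s * b * s^-1)%g
          = (pvec a - pvec b) + (pvec b - pvec (s * b * s^-1)%g).
  by rewrite addrA subrK.
exact: in_vass_spanD IHk (sub_sigma_longJ_in_vass_span b).
Qed.
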